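(* Let $A$ be a finite alphabet and let $M,N$ be regular languages over $A(2,\$)$, each consisting of words of the form $(w_1,w_2)\delta_A^L$ with $w_1,w_2\in A^*$. Suppose there are constants $C,C'$ such that $(w_1,w_2)\delta_A^L\in M$ implies $||w_1|-|w_2||\leq C$, and $(w_1',w_2')\delta_A^L\in N$ implies $||w_1'|-|w_2'||\leq C'$. Then the language $M\odot' N=\{(w_1w_1',w_2w_2')\delta_A^L:(w_1,w_2)\delta_A^L\in M,\ (w_1',w_2')\delta_A^L\in N\}$ is regular.
   Context: $A^*$ is the free monoid on $A$, $|w|$ is length. Let $\$\notin A$ and $A(2,\$)=(A\cup\{\$\})^2\setminus\{(\$,\$)\}$. For $\alpha,\beta\in A^*$, $(\alpha,\beta)\delta_A^L$ is the word over $A(2,\$)$ obtained by padding the shorter of $\alpha,\beta$ on the left with $\$$'s to equal length and reading the pairs of letters position by position. Regular means accepted by a finite state automaton. *)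

From mathcomp Require Import all_boot.
Set Implicit Arguments. Unset Strict Implicit. Unset Printing Implicit Defensive.

(* The padded alphabet A(2,$) = (A ∪ {$})^2 \ {($,$)}; $ is encoded as None. *)
Definition padA (A : finType) : predArgType :=
  {p : option A * option A | p != (None, None)}.

Definition lpad (A : Type) (n : nat) (w : seq A) : seq (option A) :=
  nseq (n - size w) None ++ map Some w.

Definition delta_raw (A : Type) (w1 w2 : seq A) : seq (option A * option A) :=
  let n := maxn (size w1) (size w2) in zip (lpad n w1) (lpad n w2).

(* (w1,w2) delta_A^L as a word over A(2,$).  Every letter of delta_raw
   differs from ($,$), so pmap insub keeps all of them. *)
Definition deltaL (A : finType) (w1 w2 : seq A) : seq (padA A) :=
  pmap insub (delta_raw w1 w2).

Definition regular (S : finType) (L : seq S -> Prop) : Prop :=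
  exists (Q : finType) (q0 : Q) (F : pred Q) (d : Q -> S -> Q),
    forall u, L u <-> F (foldl d q0 u).

Definition absdiff (m n : nat) : nat := maxn m n - minn m n.

Definition odot' (A : finType) (M N : seq (padA A) -> Prop) : seq (padA A) -> Prop :=
  fun u => exists w1 w2 w1' w2' : seq A,
    [/\ u = deltaL (w1 ++ w1') (w2 ++ w2'), M (deltaL w1 w2) & N (deltaL w1' w2')].

From mathcomp Require Import all_boot zify.
From Stdlib Require Import ClassicalEpsilon.

(* In [(w1 w1', w2 w2')deltaL] the left padding aligns the right
   ends, so the N-part sits exactly as in [(w1', w2')deltaL], while the two
   tracks of the M-part are shifted against each other by at most [C'].  After
   reading a prefix, feed each automaton the longest prefix of its own padded
   word that has already been read on both tracks; only boundedly many letters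
   per track are read but not yet fed.  The two automaton states, these
   bounded buffers and the bounded paddings summarize the prefix in a finite
   set, and two prefixes with equal summaries can be exchanged by splicing the
   underlying words.  So the language has finitely many Nerode classes. *)

Set Implicit Arguments. Unset Strict Implicit. Unset Printing Implicit Defensive.

Section Splicing.
Variables S T : Type.
Implicit Types w z v y : seq T.

Lemma take_zip n (s : seq S) (t : seq T) :
  take n (zip s t) = zip (take n s) (take n t).
Proof. by elim: s t n => [|x s IH] [|y t] [|n] //=; rewrite IH. Qed.

Lemma drop_zip n (s : seq S) (t : seq T) :
  drop n (zip s t) = zip (drop n s) (drop n t).
Proof. by elim: s t n => [|x s IH] [|y t] [|n] //=; case: drop. Qed.

Lemma take_catE n w v : take n (w ++ v) = take n w ++ take (n - size w) v.
Proof.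
rewrite take_cat; case: ltnP => [/ltnW|le_wn]; last by rewrite (take_oversize le_wn).
by rewrite -subn_eq0 => /eqP ->; rewrite take0 ?cats0.
Qed.

Lemma drop_catE n w v : drop n (w ++ v) = drop n w ++ drop (n - size w) v.
Proof.
rewrite drop_cat; case: ltnP => [/ltnW|le_wn]; last by rewrite (drop_oversize le_wn).
by rewrite -subn_eq0 => /eqP ->; rewrite drop0 ?cats0.
Qed.

Lemma cat_take_drop_buffer p r a b w z :
  p <= a -> r <= b -> drop p (take a w) = drop r (take b z) ->
  take p w ++ drop r z = take a w ++ drop b z.
Proof.
move=> le_pa le_rb buf.
rewrite -(cat_take_drop p (take a w)) take_takel // buf -catA.
by rewrite -{1}(cat_take_drop (b - r) (drop r z)) take_drop drop_drop subnK.
Qed.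

Lemma cat_take_drop_cat a b w v z y : (a <= size w) = (b <= size z) ->
  take a (w ++ v) ++ drop b (z ++ y) =
  (take a w ++ drop b z) ++ (take (a - size w) v ++ drop (b - size z) y).
Proof.
move=> same_side; rewrite take_catE drop_catE -!catA; congr (_ ++ _).
rewrite !catA; congr (_ ++ _).
case: (leqP a (size w)) => [|lt_wa].
  by rewrite -subn_eq0 => /eqP ->; rewrite take0 cats0.
have lt_zb : size z < b by rewrite ltnNge -same_side -ltnNge.
by rewrite drop_oversize ?cats0 // ltnW.
Qed.

End Splicing.

Definition asbool (P : Prop) : bool := if excluded_middle_informative P then true else false.

Lemma asboolP (P : Prop) : reflect P (asbool P).
Proof. by rewrite /asbool; case: excluded_middle_informative => p; constructor. Qed.

Section MyhillNerode.
Variables (S Q : finType) (L : seq S -> Prop) (h : seq S -> Q).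
Hypothesis h_right_invariant : forall u u' v, h u = h u' -> L (u ++ v) -> L (u' ++ v).

Let rep (q : Q) : seq S := epsilon (inhabits [::]) (fun u => h u = q).
Let step (q : Q) (a : S) : Q := h (rep q ++ [:: a]).

Let h_repK u : h (rep (h u)) = h u.
Proof. by apply: (epsilon_spec _ (fun u' => h u' = h u)); exists u. Qed.

Let nerode_of_eq u u' : h u = h u' -> forall v, L (u ++ v) <-> L (u' ++ v).
Proof. by move=> huu' v; split; apply: h_right_invariant. Qed.

Let run_nerode u : exists2 u0, foldl step (h [::]) u = h u0 &
  forall v, L (u0 ++ v) <-> L (u ++ v).
Proof.
elim/last_ind: u => [|u a [u0 run_u u0u]]; first by exists [::].
exists (rep (h u0) ++ [:: a]) => [|v]; first by rewrite foldl_rcons run_u.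
by rewrite -catA (nerode_of_eq (h_repK u0)) u0u -cats1 -catA.
Qed.

Lemma regular_of_right_invariant : regular L.
Proof.
exists Q, (h [::]), (fun q => asbool (L (rep q))), step => u.
have [u0 -> u0u] := run_nerode u.
have := nerode_of_eq (h_repK u0) [::]; have := u0u [::]; rewrite !cats0 => <- rep_u0.
by split => [/rep_u0/asboolP | /asboolP/rep_u0].
Qed.

End MyhillNerode.

Lemma regular_of_splice (S Q : finType) (I : Type) (L : seq S -> Prop)
    (P : I -> Prop) (word : I -> seq S) (abs : I -> nat -> Q) :
  (forall u, L u <-> exists2 x, P x & u = word x) ->
  (forall x y t t', P x -> P y -> abs x t = abs y t' ->
     L (take t (word x) ++ drop t' (word y))) ->
  regular L.
Proof.
move=> L_word splice.
pose h u := [set q | asbool (exists x t, [/\ P x, u = take t (word x) & abs x t = q])].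
apply: (@regular_of_right_invariant _ _ _ h) => u u' v huu' /L_word [x Px uv].
have : abs x (size u) \in h u'.
  by rewrite -huu' inE; apply/asboolP; exists x, (size u); rewrite -uv take_size_cat.
rewrite inE => /asboolP [y [t' [Py -> abs_y]]].
have -> : v = drop (size u) (word x) by rewrite -uv drop_size_cat.
exact: splice.
Qed.

Lemma dfa_splice (S Q : finType) (L : seq S -> Prop) (q0 : Q) (F : pred Q)
    (d : Q -> S -> Q) x y i i' :
  (forall u, L u <-> F (foldl d q0 u)) ->
  foldl d q0 (take i x) = foldl d q0 (take i' y) -> L y -> L (take i x ++ drop i' y).
Proof.
move=> L_dfa run_eq /L_dfa accept_y; apply/L_dfa.
by rewrite foldl_cat run_eq -foldl_cat cat_take_drop.
Qed.

Section Padding.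
Variable A : finType.
Implicit Types X Y : seq A.

Definition pad X Y : nat := maxn (size X) (size Y) - size X.

Definition track (e : nat) X : seq (option A) := nseq e None ++ map Some X.

Lemma size_track e X : size (track e X) = e + size X.
Proof. by rewrite size_cat size_nseq size_map. Qed.

Lemma padE X Y e f : minn e f = 0 -> e + size X = f + size Y -> pad X Y = e.
Proof. rewrite /pad; lia. Qed.

Lemma val_deltaL X Y : map val (deltaL X Y) = zip (track (pad X Y) X) (track (pad Y X) Y).
Proof.
have -> : zip (track (pad X Y) X) (track (pad Y X) Y) = delta_raw X Y.
  by rewrite /delta_raw /lpad /track /pad maxnC.
rewrite /deltaL (pmap_filter (@insubK _ _ (padA A))); apply/all_filterP.
apply: (sub_all (a1 := fun p => p != (None, None))) => [p nonblank|].
  by rewrite /= insubT.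
rewrite /delta_raw /lpad.
have [->|->] /= :
    maxn (size X) (size Y) - size X = 0 \/ maxn (size X) (size Y) - size Y = 0.
- by lia.
- by elim: X (nseq _ _ ++ _) => [|x X IH] [|b s] //=.
by elim: Y (nseq _ _ ++ _) => [|y Y IH] [|b s] //=; rewrite IH andbT; case: b.
Qed.

Lemma track_splice e t t' (X X' : seq A) : minn e t = minn e t' ->
  take t (track e X) ++ drop t' (track e X') = track e (take (t - e) X ++ drop (t' - e) X').
Proof.
rewrite /track take_catE drop_catE size_nseq map_cat map_take map_drop drop_nseq.
case: (ltnP t e) => [lt_te | le_et] same_regime.
  have -> : t' = t by lia.
  have -> : t - e = 0 by lia.
  rewrite (take_nseq _ (ltnW lt_te)) take0 drop0 /=.
  by rewrite cats0 catA -nseqD (subnKC (ltnW lt_te)).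
have -> : e - t' = 0 by lia.
by rewrite take_oversize ?size_nseq //= -catA.
Qed.

Lemma pad_balance X Y : pad X Y + size X = pad Y X + size Y.
Proof. rewrite /pad; lia. Qed.

Lemma pad_min X Y : minn (pad X Y) (pad Y X) = 0.
Proof. rewrite /pad; lia. Qed.

Lemma deltaL_splice X Y X' Y' t t' :
  pad X Y = pad X' Y' -> pad Y X = pad Y' X' ->
  minn (pad X Y) t = minn (pad X Y) t' -> minn (pad Y X) t = minn (pad Y X) t' ->
  take t (deltaL X Y) ++ drop t' (deltaL X' Y') =
  deltaL (take (t - pad X Y) X ++ drop (t' - pad X Y) X')
         (take (t - pad Y X) Y ++ drop (t' - pad Y X) Y').
Proof.
move=> eq_e eq_f regime_e regime_f; apply: (inj_map val_inj).
have bal := pad_balance X Y; have bal' := pad_balance X' Y'; rewrite -eq_e -eq_f in bal'.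
rewrite map_cat map_take map_drop !val_deltaL -eq_e -eq_f take_zip drop_zip.
rewrite -zip_cat ?size_take_min ?size_track ?bal // !track_splice //.
have bal'' : pad X Y + size (take (t - pad X Y) X ++ drop (t' - pad X Y) X') =
             pad Y X + size (take (t - pad Y X) Y ++ drop (t' - pad Y X) Y').
  rewrite !size_cat !size_take_min !size_drop; lia.
by rewrite (padE (pad_min X Y) bal'') (padE _ (esym bal'')) // minnC pad_min.
Qed.

End Padding.

Lemma inord_le_inj K m n : m <= K -> n <= K -> inord m = inord n :> 'I_K.+1 -> m = n.
Proof. by move=> le_mK le_nK /(congr1 val); rewrite /= !inordK. Qed.

Lemma insub_bseq_inj (T : Type) K (s s' : seq T) :
  size s <= K -> size s' <= K -> insub_bseq K s = insub_bseq K s' -> s = s'.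
Proof. by move=> le_sK le_s'K /(congr1 val); rewrite /insub_bseq !insubdK. Qed.

Section Cut.
Variables (A : finType) (K : nat).
Implicit Types w z : seq A.

(* [cut w1 w2 r1 r2] is the length of the longest prefix of [deltaL w1 w2]
   that reads only the first [r1] letters of [w1] and [r2] letters of [w2]. *)
Definition cut w1 w2 r1 r2 : nat :=
  minn (maxn (size w1) (size w2)) (minn (r1 + pad w1 w2) (r2 + pad w2 w1)).

(* The two buffers are the letters read on each track beyond the cut. *)
Definition cut_summary w1 w2 r1 r2 :
    'I_K.+1 * 'I_K.+1 * 'I_K.+1 * K.-bseq A * K.-bseq A :=
  let i := cut w1 w2 r1 r2 in
  (inord (pad w1 w2), inord (pad w2 w1), inord (minn K i),
   insub_bseq K (drop (i - pad w1 w2) (take r1 w1)),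
   insub_bseq K (drop (i - pad w2 w1) (take r2 w2))).

Lemma cut_sub_pad w1 w2 r1 r2 :
  cut w1 w2 r1 r2 - pad w1 w2 <= r1 /\ cut w1 w2 r1 r2 - pad w2 w1 <= r2.
Proof. rewrite /cut; lia. Qed.

Lemma cut_summary_bounds w1 w2 r1 r2 :
  absdiff (size w1) (size w2) + absdiff r1 r2 <= K ->
  [/\ pad w1 w2 <= K, pad w2 w1 <= K,
      size (drop (cut w1 w2 r1 r2 - pad w1 w2) (take r1 w1)) <= K
    & size (drop (cut w1 w2 r1 r2 - pad w2 w1) (take r2 w2)) <= K].
Proof. by rewrite !size_drop !size_take_min /cut /pad /absdiff; split; lia. Qed.

Lemma deltaL_splice_cut w1 w2 r1 r2 z1 z2 s1 s2 :
  absdiff (size w1) (size w2) + absdiff r1 r2 <= K ->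
  absdiff (size z1) (size z2) + absdiff s1 s2 <= K ->
  cut_summary w1 w2 r1 r2 = cut_summary z1 z2 s1 s2 ->
  take (cut w1 w2 r1 r2) (deltaL w1 w2) ++ drop (cut z1 z2 s1 s2) (deltaL z1 z2) =
  deltaL (take r1 w1 ++ drop s1 z1) (take r2 w2 ++ drop s2 z2).
Proof.
move=> /cut_summary_bounds[gw hw bw1 bw2] /cut_summary_bounds[gz hz bz1 bz2].
case=> /(inord_le_inj gw gz) eq_g /(inord_le_inj hw hz) eq_h.
move=> /(inord_le_inj (geq_minl _ _) (geq_minl _ _)) eq_i.
move=> /(insub_bseq_inj bw1 bz1) buf1 /(insub_bseq_inj bw2 bz2) buf2.
have [le_w1 le_w2] := cut_sub_pad w1 w2 r1 r2.
have [le_z1 le_z2] := cut_sub_pad z1 z2 s1 s2.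
rewrite deltaL_splice //; [|lia..].
rewrite -eq_g -eq_h in le_z1 le_z2 buf1 buf2.
by congr deltaL; apply: cat_take_drop_buffer.
Qed.

End Cut.

Section Concatenation.
Variables (A : finType) (C C' : nat) (M N : seq (padA A) -> Prop).
Variables (Q1 : finType) (q1 : Q1) (F1 : pred Q1) (d1 : Q1 -> padA A -> Q1).
Variables (Q2 : finType) (q2 : Q2) (F2 : pred Q2) (d2 : Q2 -> padA A -> Q2).
Hypothesis M_dfa : forall u, M u <-> F1 (foldl d1 q1 u).
Hypothesis N_dfa : forall u, N u <-> F2 (foldl d2 q2 u).
Hypothesis M_bounded : forall w1 w2, M (deltaL w1 w2) -> absdiff (size w1) (size w2) <= C.
Hypothesis N_bounded : forall w1 w2, N (deltaL w1 w2) -> absdiff (size w1) (size w2) <= C'.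
Implicit Types w v z y : seq A.

Local Notation K := (2 * (C + C')).

(* After [t] letters of [deltaL (w1 ++ v1) (w2 ++ v2)], [t - e] letters of
   [w1 ++ v1] and [t - f] letters of [w2 ++ v2] have been read. *)
Definition prefix_summary w1 w2 v1 v2 t :=
  let e := pad (w1 ++ v1) (w2 ++ v2) in
  let f := pad (w2 ++ v2) (w1 ++ v1) in
  (((inord e : 'I_K.+1), (inord f : 'I_K.+1), (inord (minn K t) : 'I_K.+1),
    t - e <= size w1, t - f <= size w2,
    foldl d1 q1 (take (cut w1 w2 (t - e) (t - f)) (deltaL w1 w2)),
    foldl d2 q2 (take (cut v1 v2 (t - e - size w1) (t - f - size w2)) (deltaL v1 v2))),
   cut_summary K w1 w2 (t - e) (t - f),
   cut_summary K v1 v2 (t - e - size w1) (t - f - size w2)).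

Lemma prefix_summary_bounds w1 w2 v1 v2 t :
  absdiff (size w1) (size w2) <= C -> absdiff (size v1) (size v2) <= C' ->
  let e := pad (w1 ++ v1) (w2 ++ v2) in
  let f := pad (w2 ++ v2) (w1 ++ v1) in
  [/\ e <= K, f <= K, absdiff (size w1) (size w2) + absdiff (t - e) (t - f) <= K
    & absdiff (size v1) (size v2) + absdiff (t - e - size w1) (t - f - size w2) <= K].
Proof. rewrite /= /pad /absdiff !size_cat; split; lia. Qed.

Lemma odot'_splice w1 w2 v1 v2 z1 z2 y1 y2 t t' :
  M (deltaL w1 w2) -> N (deltaL v1 v2) -> M (deltaL z1 z2) -> N (deltaL y1 y2) ->
  prefix_summary w1 w2 v1 v2 t = prefix_summary z1 z2 y1 y2 t' ->
  odot' M N (take t (deltaL (w1 ++ v1) (w2 ++ v2)) ++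
             drop t' (deltaL (z1 ++ y1) (z2 ++ y2))).
Proof.
move=> Mw Nv Mz Ny.
have [ew fw small_w small_v] := prefix_summary_bounds t (M_bounded Mw) (N_bounded Nv).
have [ez fz small_z small_y] := prefix_summary_bounds t' (M_bounded Mz) (N_bounded Ny).
move=> /pair_equal_spec[/pair_equal_spec[+ sum_M] sum_N].
case=> /(inord_le_inj ew ez) eq_e /(inord_le_inj fw fz) eq_f.
move=> /(inord_le_inj (geq_minl _ _) (geq_minl _ _)) eq_t side1 side2 run_M run_N.
rewrite -eq_e -eq_f in side1 side2 run_M run_N sum_M sum_N small_z small_y.
pose e := pad (w1 ++ v1) (w2 ++ v2); pose f := pad (w2 ++ v2) (w1 ++ v1).
exists (take (t - e) w1 ++ drop (t' - e) z1), (take (t - f) w2 ++ drop (t' - f) z2),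
  (take (t - e - size w1) v1 ++ drop (t' - e - size z1) y1),
  (take (t - f - size w2) v2 ++ drop (t' - f - size z2) y2).
split.
- by rewrite deltaL_splice -?eq_e -?eq_f ?cat_take_drop_cat //; lia.
- rewrite -(deltaL_splice_cut small_w small_z sum_M); exact: dfa_splice M_dfa run_M Mz.
rewrite -(deltaL_splice_cut small_v small_y sum_N); exact: dfa_splice N_dfa run_N Ny.
Qed.

End Concatenation.

Theorem mainTheorem3 (A : finType) (M N : seq (padA A) -> Prop) (C C' : nat) :
  regular M -> regular N ->
  (forall u, M u -> exists w1 w2 : seq A, u = deltaL w1 w2) ->
  (forall u, N u -> exists w1 w2 : seq A, u = deltaL w1 w2) ->
  (forall w1 w2 : seq A, M (deltaL w1 w2) -> absdiff (size w1) (size w2) <= C) ->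
  (forall w1 w2 : seq A, N (deltaL w1 w2) -> absdiff (size w1) (size w2) <= C') ->
  regular (odot' M N).
Proof.
move=> [Q1 [q1 [F1 [d1 M_dfa]]]] [Q2 [q2 [F2 [d2 N_dfa]]]] _ _ M_bounded N_bounded.
apply: (@regular_of_splice _ _ _ _
  (fun '(w1, w2, v1, v2) => M (deltaL w1 w2) /\ N (deltaL v1 v2))
  (fun '(w1, w2, v1, v2) => deltaL (w1 ++ v1) (w2 ++ v2))
  (fun '(w1, w2, v1, v2) => prefix_summary C C' q1 d1 q2 d2 w1 w2 v1 v2)).
- move=> u; split => [[w1 [w2 [v1 [v2 [-> Mw Nv]]]]] | [[[[w1 w2] v1] v2] [Mw Nv] ->]].
    by exists (w1, w2, v1, v2).
  by exists w1, w2, v1, v2.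
move=> [[[w1 w2] v1] v2] [[[z1 z2] y1] y2] t t' [Mw Nv] [Mz Ny].
exact: odot'_splice.
Qed.
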